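(* Let $m\geq n\geq 2$. If $S$ is a $\{2\}$-resolving set of $K_m\Box K_n$, and $q$ and $r$ are integers such that $|S|=qm+r$ with $0\leq r<m$, then $$r\binom{n-(q+1)}{2}+(m-r)\binom{n-q}{2}\leq\binom{n}{2}.$$
   Context: $K_m\Box K_n$ has vertices $av$ with $a\in V(K_m)$, $v\in V(K_n)$; distinct $av,bu$ are adjacent iff $a=b$ or $u=v$. $d$ is the shortest-path distance, $d(s,X)=\min_{x\in X}d(s,x)$, $\mathcal{D}_S(X)=(d(s_1,X),\dots,d(s_k,X))$ for $S=\{s_1,\dots,s_k\}$. $S$ is a $\{2\}$-resolving set if $\mathcal{D}_S(X)\neq\mathcal{D}_S(Y)$ for all distinct nonempty vertex sets $X,Y$ with $|X|,|Y|\leq 2$. Binomial coefficients $\binom{a}{2}$ are taken as $a(a-1)/2$ for integers $a$ (in particular $0$ for $a\in\{0,1\}$). *)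

From mathcomp Require Import all_boot all_order all_algebra.
Set Implicit Arguments. Unset Strict Implicit. Unset Printing Implicit Defensive.
Import Order.TTheory GRing.Theory Num.Theory.

(* Vertices of K_m □ K_n : pairs (a, v) with a : 'I_m, v : 'I_n. *)
Definition rook_vertex (m n : nat) : finType := ('I_m * 'I_n)%type.

Definition rook_adj (m n : nat) : rel (rook_vertex m n) :=
  fun x y => (x != y) && ((x.1 == y.1) || (x.2 == y.2)).

Fixpoint rook_ball (m n : nat) (k : nat) (x : rook_vertex m n)
  : {set rook_vertex m n} :=
  match k with
  | 0 => [set x]
  | k'.+1 => rook_ball k' x :|:
             [set y | [exists z in rook_ball k' x, rook_adj z y]]
  end.

(* shortest-path distance: least k with y in ball k x (the graph is
   connected for m, n >= 1, so k <= #|V| suffices; default #|V|) *)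
Definition rook_dist (m n : nat) (x y : rook_vertex m n) : nat :=
  head #|rook_vertex m n|
    [seq k <- iota 0 #|rook_vertex m n|.+1 | y \in rook_ball k x].

Definition rook_dist_set (m n : nat) (s : rook_vertex m n)
  (X : {set rook_vertex m n}) : nat :=
  \big[minn/#|rook_vertex m n|]_(x in X) rook_dist s x.

Definition two_resolving (m n : nat) (S : {set rook_vertex m n}) : Prop :=
  forall X Y : {set rook_vertex m n},
    X != set0 -> Y != set0 -> #|X| <= 2 -> #|Y| <= 2 -> X != Y ->
    exists2 s, s \in S & rook_dist_set s X != rook_dist_set s Y.

Definition binom2z (a : int) : int := ((a * (a - 1)) %/ 2)%Z.

From HB Require Import structures.
From mathcomp Require Import all_boot all_order all_algebra all_fingroup zify ring.
Import Order.TTheory GRing.Theory Num.Theory.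

Set Implicit Arguments.
Unset Strict Implicit.
Unset Printing Implicit Defensive.

(* In a {2}-resolving set S, every "rectangle" {a,b} x {u,v} meets S: a vertex
   outside the rectangle is fixed by the transposition of rows a, b or by that
   of columns u, v, and that graph automorphism exchanges the diagonals
   {au, bv} and {av, bu}, which S would otherwise not distinguish. Hence the
   sets of columns missed by S in two different rows share at most one
   column, so the pairs of such columns, taken over all rows, are distinct
   pairs from an n-set:  sum_a C(n - c_a, 2) <= C(n, 2),  where c_a is the
   number of vertices of S in row a. Since sum_a c_a = qm + r, convexity of
   x |-> C(x, 2) bounds the left-hand side from below by the balanced value
   r C(n - q - 1, 2) + (m - r) C(n - q, 2). *)

HB.instance Definition _ := SemiGroup.isComLaw.Build nat minn minnA minnC.

Section ProductAutomorphism.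

Variables (m n : nat) (f : 'I_m -> 'I_m) (g : 'I_n -> 'I_n).
Hypotheses (f_inj : injective f) (g_inj : injective g).

Definition rook_map (x : rook_vertex m n) : rook_vertex m n := (f x.1, g x.2).

Lemma rook_map_inj : injective rook_map.
Proof. by move=> [x1 x2] [y1 y2] [/f_inj -> /g_inj ->]. Qed.

Lemma rook_adj_map x y : rook_adj (rook_map x) (rook_map y) = rook_adj x y.
Proof. by rewrite /rook_adj (inj_eq rook_map_inj) /= (inj_eq f_inj) (inj_eq g_inj). Qed.

Lemma rook_ball_map k x : rook_ball k (rook_map x) = rook_map @: rook_ball k x.
Proof.
elim: k => [|k IHk] /=; first by rewrite imset_set1.
rewrite imsetU IHk; congr (_ :|: _); apply/setP => y.
rewrite -(f_invF rook_map_inj y) (mem_imset _ _ rook_map_inj) !inE.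
apply/existsP/existsP => -[z /andP[z_ball z_adj]].
  case/imsetP: z_ball => z' z'_ball ->{z} in z_adj *.
  by exists z'; rewrite z'_ball -rook_adj_map.
by exists (rook_map z); rewrite (mem_imset _ _ rook_map_inj) z_ball rook_adj_map.
Qed.

Lemma rook_dist_map x y : rook_dist (rook_map x) (rook_map y) = rook_dist x y.
Proof.
rewrite /rook_dist; congr head; apply: eq_filter => k.
by rewrite rook_ball_map (mem_imset _ _ rook_map_inj).
Qed.

Lemma rook_dist_set_map s (X : {set rook_vertex m n}) :
  rook_dist_set (rook_map s) (rook_map @: X) = rook_dist_set s X.
Proof.
rewrite /rook_dist_set (reindex_inj rook_map_inj) /=.
by apply: eq_big => x; rewrite ?(mem_imset _ _ rook_map_inj) ?rook_dist_map.
Qed.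

End ProductAutomorphism.

Lemma rook_dist_set_fixed m n (f : 'I_m -> 'I_m) (g : 'I_n -> 'I_n) s
    (X Y : {set rook_vertex m n}) :
  injective f -> injective g ->
  rook_map f g s = s -> rook_map f g @: X = Y ->
  rook_dist_set s X = rook_dist_set s Y.
Proof. by move=> f_inj g_inj fix_s <-; rewrite -{2}fix_s rook_dist_set_map. Qed.

Lemma two_resolving_rectangle m n (S : {set rook_vertex m n}) a b u v :
  two_resolving S -> a != b -> u != v ->
  [|| (a, u) \in S, (a, v) \in S, (b, u) \in S | (b, v) \in S].
Proof.
move=> S_res ab uv; apply/negPn/negP; rewrite !negb_or => /and4P[au av bu bv].
pose X : {set rook_vertex m n} := [set (a, u); (b, v)].
pose Y : {set rook_vertex m n} := [set (a, v); (b, u)].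
have card2 (x y : rook_vertex m n) : #|[set x; y]| <= 2.
  by rewrite cards2; case: (_ != _).
have pair_neq0 (x y : rook_vertex m n) : [set x; y] != set0.
  by apply/set0Pn; exists x; rewrite set21.
have XY : X != Y.
  apply: contraNneq au => /setP/(_ (a, u)); rewrite !inE !xpair_eqE !eqxx.
  by rewrite (negbTE uv) (negbTE ab).
have [[s1 s2] s_S /eqP[]] :=
  S_res X Y (pair_neq0 _ _) (pair_neq0 _ _) (card2 _ _) (card2 _ _) XY.
have [s1ab | s1ab] := boolP ((s1 == a) || (s1 == b)).
  have s2u : s2 != u by apply: contraTneq s_S => ->; case/orP: s1ab => /eqP->.
  have s2v : s2 != v by apply: contraTneq s_S => ->; case/orP: s1ab => /eqP->.
  apply: (@rook_dist_set_fixed _ _ id (tperm u v)) => //; first exact: perm_inj.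
    by rewrite /rook_map /= tpermD // eq_sym.
  by rewrite imsetU !imset_set1 /rook_map /= tpermL tpermR.
have [s1a s1b] : s1 != a /\ s1 != b by move: s1ab; rewrite negb_or => /andP.
apply: (@rook_dist_set_fixed _ _ (tperm a b) id) => //; first exact: perm_inj.
  by rewrite /rook_map /= tpermD // eq_sym.
by rewrite imsetU !imset_set1 /rook_map /= tpermL tpermR setUC.
Qed.

Lemma sum_bin2_card_le (I T : finType) (F : I -> {set T}) :
  (forall i j, i != j -> #|F i :&: F j| <= 1) ->
  \sum_i 'C(#|F i|, 2) <= 'C(#|T|, 2).
Proof.
move=> F_meet1.
pose pairs i := [set B : {set T} | B \subset F i & #|B| == 2].
have pairs_disj i j : i != j -> [disjoint pairs i & pairs j].
  move=> ij; apply/pred0P => B /=; apply/negP; rewrite !inE.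
  case/andP=> /andP[BFi /eqP B2] /andP[BFj _].
  have := subset_leq_card (_ : B \subset F i :&: F j); rewrite subsetI BFi BFj.
  by move/(_ isT); rewrite B2 => /leq_trans/(_ (F_meet1 i j ij)).
rewrite -card_draws.
under eq_bigr do rewrite -cards_draws -sum1_card.
rewrite -(partition_disjoint_bigcup _ _ pairs_disj) sum1_card.
by apply/subset_leq_card/subsetP => B /bigcupP[i _]; rewrite !inE => /andP[_ ->].
Qed.

Definition rook_row m n (S : {set rook_vertex m n}) (a : 'I_m) : {set 'I_n} :=
  [set v | (a, v) \in S].

Lemma sum_card_rook_row m n (S : {set rook_vertex m n}) :
  \sum_a #|rook_row S a| = #|S|.
Proof.
under eq_bigr do rewrite -sum1_card.
rewrite (pair_big_dep predT (fun a v => v \in rook_row S a)) -sum1_card /=.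
by apply: eq_bigl => -[a v]; rewrite inE.
Qed.

Lemma two_resolving_row_gaps m n (S : {set rook_vertex m n}) :
  two_resolving S ->
  forall a b, a != b -> #|~: rook_row S a :&: ~: rook_row S b| <= 1.
Proof.
move=> S_res a b ab; rewrite leqNgt; apply/card_gt1P => -[u [v []]].
rewrite !inE => /andP[au bu] /andP[av bv] uv.
have := two_resolving_rectangle S_res ab uv.
by rewrite (negbTE au) (negbTE av) (negbTE bu) (negbTE bv).
Qed.

Lemma two_resolving_sum_bin2 m n (S : {set rook_vertex m n}) :
  two_resolving S -> \sum_a 'C(n - #|rook_row S a|, 2) <= 'C(n, 2).
Proof.
move=> S_res; have := sum_bin2_card_le (two_resolving_row_gaps S_res).
by rewrite card_ord; under eq_bigr do rewrite cardsCs setCK card_ord.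
Qed.

Local Open Scope ring_scope.

Lemma binom2zE (a : int) : binom2z a * 2 = a * (a - 1).
Proof.
have [t [e [-> [->|->]]]] : exists t e : int, a = 2 * t + e /\ (e = 0 \/ e = 1).
- by exists (a %/ 2)%Z, (a %% 2)%Z; lia.
- rewrite /binom2z (_ : (2 * t + 0) * _ = t * (2 * t - 1) * 2) ?mulzK //; ring.
- rewrite /binom2z (_ : (2 * t + 1) * _ = t * (2 * t + 1) * 2) ?mulzK //; ring.
Qed.

Lemma binom2z_nat (k : nat) : binom2z k%:Z = 'C(k, 2)%:Z.
Proof.
have bin2_mul2 : ('C(k, 2) * 2 = k * (k - 1))%N.
  by elim: k => // k IHk; rewrite binS bin1; nia.
by apply: (mulIf (_ : 2 != 0)) => //; rewrite binom2zE; nia.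
Qed.

Lemma binom2z_chord_le (x t : int) :
  binom2z x + t * (binom2z (x - 1) - binom2z x) <= binom2z (x - t).
Proof.
rewrite -(ler_pM2r (_ : 0 < 2)) // mulrDl -mulrA mulrBl !binom2zE -subr_ge0.
by rewrite (_ : _ - _ = t * (t - 1)); [nia | ring].
Qed.

Lemma sum_chord_le (I : finType) (c F : I -> int) (A B q r : int) :
  \sum_i c i = q * #|I|%:Z + r ->
  (forall i, A + (c i - q) * (B - A) <= F i) ->
  r * B + (#|I|%:Z - r) * A <= \sum_i F i.
Proof.
move=> sum_c chord; apply: le_trans (ler_sum _ (fun i _ => chord i)).
rewrite big_split /= sumr_const -big_distrl /= sumrB sumr_const sum_c.
by rewrite -subr_ge0 (_ : _ - _ = 0); last ring.
Qed.

(* None of the bounds on [n], [m] and [r] is needed. *)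
Theorem mainTheorem13 (m n : nat) (S : {set rook_vertex m n}) (q r : int) :
  (2 <= n)%N -> (n <= m)%N ->
  two_resolving S ->
  (#|S|%:Z = q * m%:Z + r) -> 0 <= r -> r < m%:Z ->
  r * binom2z (n%:Z - (q + 1)) + (m%:Z - r) * binom2z (n%:Z - q)
    <= binom2z n%:Z.
Proof.
move=> _ _ S_res S_card _ _.
pose c a := #|rook_row S a|.
have c_le_n a : (c a <= n)%N by rewrite -[leqRHS]card_ord max_card.
have sum_c : \sum_a (c a)%:Z = q * #|'I_m|%:Z + r.
  rewrite card_ord -S_card -sum_card_rook_row -natz natr_sum.
  by under eq_bigr do rewrite natz.
have rows_le : \sum_a binom2z (n%:Z - (c a)%:Z) <= binom2z n%:Z.
  have -> : \sum_a binom2z (n%:Z - (c a)%:Z) = (\sum_a 'C(n - c a, 2))%N%:Z.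
    rewrite -[in RHS]natz natr_sum; apply: eq_bigr => a _.
    by rewrite natz -binom2z_nat subzn.
  by rewrite binom2z_nat lez_nat two_resolving_sum_bin2.
have chord a : binom2z (n%:Z - q)
    + ((c a)%:Z - q) * (binom2z (n%:Z - (q + 1)) - binom2z (n%:Z - q))
    <= binom2z (n%:Z - (c a)%:Z).
  have := binom2z_chord_le (n%:Z - q) ((c a)%:Z - q).
  have -> : n%:Z - q - 1 = n%:Z - (q + 1) by ring.
  by have -> : n%:Z - q - ((c a)%:Z - q) = n%:Z - (c a)%:Z by ring.
by have := sum_chord_le sum_c chord; rewrite card_ord => /le_trans; apply.
Qed.
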